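(* Let $W$ be a non-negative symmetric $n\times n$ matrix with zero diagonal. Then \begin{enumerate} \item $\mathcal D(W)$ consists of exactly one matrix $D^*$; \item $\mathcal P(W)=\{P\in\mathcal P: P(W-D^* )=0\}$. \end{enumerate}
   Context: $\mathcal P=\{P\in M_n(\mathbb R): P\succeq0,\ P_{ii}=1\ \forall i\}$. For matrices, $P\circ W=\sum_{i,j}P_{ij}W_{ij}$. $\mathcal P(W)$ is the set of optimal solutions of the SDP: minimize $P\circ W$ subject to $P\in\mathcal P$. $\mathcal D(W)$ is the set of optimal solutions of its dual: maximize $\sum_iD_{ii}$ subject to $D$ diagonal and $W-D\succeq0$. Here $A\succeq0$ means $A$ is positive semidefinite. *)

From mathcomp Require Import all_boot all_order all_algebra.
From mathcomp Require Import reals.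
Set Implicit Arguments. Unset Strict Implicit. Unset Printing Implicit Defensive.
Import Order.TTheory GRing.Theory Num.Theory.
Local Open Scope ring_scope.

Section Defs.
Variables (R : realType) (n : nat).

Definition psd (A : 'M[R]_n) : Prop :=
  A^T = A /\ forall x : 'cV[R]_n, 0 <= (x^T *m A *m x) 0 0.

Definition frob (P W : 'M[R]_n) : R := \sum_(i < n) \sum_(j < n) P i j * W i j.

Definition elliptope (P : 'M[R]_n) : Prop :=
  psd P /\ forall i, P i i = 1.

(* calP(W): optimal solutions of  min P o W  s.t. P in calP *)
Definition primal_opt (W P : 'M[R]_n) : Prop :=
  elliptope P /\ forall Q, elliptope Q -> frob P W <= frob Q W.

Definition dual_feasible (W D : 'M[R]_n) : Prop :=
  is_diag_mx D /\ psd (W - D).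

(* calD(W): optimal solutions of  max sum_i D_ii  s.t. D diagonal, W - D psd *)
Definition dual_opt (W D : 'M[R]_n) : Prop :=
  dual_feasible W D /\
  forall D', dual_feasible W D' -> \sum_(i < n) D' i i <= \sum_(i < n) D i i.

End Defs.

(* The elliptope is compact, so the primal problem has a minimiser P.  Writing P
   as the Gram matrix of unit vectors u_i and rotating each u_i towards a fresh
   orthogonal direction, by an angle proportional to x_i for a test vector x,
   stays in the elliptope; the first-order optimality of P under these moves says exactly
   that W - D_P is positive semidefinite, where D_P = Diag (sum_j P_ij W_ij).
   As tr D_P = P o W, weak duality makes D_P dual optimal.  For positive
   semidefinite Q and S, Q o S >= 0 with equality only if Q S = 0 (write Q as a
   sum of rank-one matrices v v^T); hence optimality of a feasible pair is the
   complementary slackness P (W - D) = 0, and since P_ii = 1 the diagonal of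
   this identity determines D = D_P. *)

From mathcomp Require Import all_boot all_order all_algebra reals.
From mathcomp Require Import all_classical all_analysis.
From mathcomp Require Import ring lra.
Set Implicit Arguments. Unset Strict Implicit. Unset Printing Implicit Defensive.
Import Order.TTheory GRing.Theory Num.Theory.
Import numFieldNormedType.Exports.
Local Open Scope ring_scope.

(** * Positive semidefinite matrices *)

Lemma quadratic_ge0_linear_coef_eq0 (R : realFieldType) (b c : R) :
  (forall t, 0 <= 2 * t * b + t ^+ 2 * c) -> b = 0.
Proof.
move=> H; have c0 : 0 <= c by have := H 1; have := H (-1); lra.
have c1 : 0 < c + 1 by lra.
have := H (- b / (c + 1)); set u := - b / (c + 1).
have hu : u * (c + 1) = - b by rewrite /u mulfVK // gt_eqF.
nra.
Qed.

Section Semidefinite.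
Variables (R : realType) (n : nat).
Implicit Types (A B P Q S : 'M[R]_n) (v x y : 'cV[R]_n).

Definition bform A x y : R := (x^T *m A *m y) 0 0.

Lemma bformE A x y : bform A x y = \sum_i \sum_j x i 0 * A i j * y j 0.
Proof.
rewrite /bform mxE; under eq_bigr do rewrite mxE big_distrl.
rewrite exchange_big; apply: eq_bigr => i _; apply: eq_bigr => j _.
by rewrite !mxE.
Qed.

Lemma bformC A x y : A^T = A -> bform A x y = bform A y x.
Proof.
move=> sA; have -> : bform A x y = (x^T *m A *m y)^T 0 0 by rewrite mxE.
by rewrite !trmx_mul trmxK sA mulmxA.
Qed.

Lemma bformDl A x y z : bform A (x + y) z = bform A x z + bform A y z.
Proof. by rewrite /bform linearD /= !mulmxDl mxE. Qed.

Lemma bformDr A x y z : bform A z (x + y) = bform A z x + bform A z y.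
Proof. by rewrite /bform mulmxDr mxE. Qed.

Lemma bformZl A t x y : bform A (t *: x) y = t * bform A x y.
Proof. by rewrite /bform linearZ /= -!scalemxAl mxE. Qed.

Lemma bformZr A t x y : bform A x (t *: y) = t * bform A x y.
Proof. by rewrite /bform -scalemxAr mxE. Qed.

Lemma bformZm A t x y : bform (t *: A) x y = t * bform A x y.
Proof. by rewrite /bform -scalemxAr -scalemxAl mxE. Qed.

Lemma bformB A B x y : bform (A - B) x y = bform A x y - bform B x y.
Proof. by rewrite /bform mulmxBr mulmxBl !mxE. Qed.

Lemma bform_line A x y t : A^T = A ->
  bform A (x + t *: y) (x + t *: y) = bform A x x + 2 * t * bform A x y + t ^+ 2 * bform A y y.
Proof.
by move=> sA; rewrite bformDl !bformDr !bformZl !bformZr (bformC y x sA); ring.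
Qed.

Lemma bform_deltal A i y : bform A (delta_mx i 0) y = (A *m y) i 0.
Proof.
rewrite /bform -mulmxA mxE (bigD1 i) //= big1 ?addr0; first by rewrite !mxE eqxx mul1r.
by move=> j /negbTE ji; rewrite !mxE ji mul0r.
Qed.

Lemma bform_delta A i j : bform A (delta_mx i 0) (delta_mx j 0) = A i j.
Proof.
rewrite bform_deltal mxE (bigD1 j) //= big1 ?addr0; first by rewrite mxE !eqxx mulr1.
by move=> k /negbTE kj; rewrite mxE kj mulr0.
Qed.

Lemma bform_rank1 v x y : bform (v *m v^T) x y = (x^T *m v) 0 0 * (v^T *m y) 0 0.
Proof. by rewrite /bform !mulmxA -(mulmxA _ v^T) mxE big_ord1. Qed.

Lemma bform_diag (d : 'rV[R]_n) x : bform (diag_mx d) x x = \sum_i d 0 i * x i 0 ^+ 2.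
Proof.
rewrite bformE; apply: eq_bigr => i _; rewrite (bigD1 i) //= big1 ?addr0.
  by rewrite mxE eqxx mulr1n expr2; ring.
by move=> j ji; rewrite mxE eq_sym (negbTE ji) mulr0n mulr0 mul0r.
Qed.

Lemma psd_bform_null A x y : psd A -> bform A x x = 0 -> bform A x y = 0.
Proof.
move=> [sA pA] hx; apply: (@quadratic_ge0_linear_coef_eq0 _ _ (bform A y y)) => t.
by have := pA (x + t *: y); rewrite /bform -/(bform _ _ _) bform_line // hx add0r.
Qed.

Lemma psd_mulmx_null A x : psd A -> bform A x x = 0 -> A *m x = 0.
Proof.
move=> hA hx; apply/matrixP => j k; rewrite ord1 [RHS]mxE -bform_deltal.
by rewrite (bformC _ _ hA.1) (psd_bform_null _ hA hx).
Qed.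

Lemma psd_diag_ge0 A i : psd A -> 0 <= A i i.
Proof. by move=> [_ pA]; rewrite -bform_delta; apply: pA. Qed.

Lemma psd_diag_eq0 A i j : psd A -> A i i = 0 -> A i j = 0.
Proof. by move=> hA hi; rewrite -bform_delta psd_bform_null // bform_delta. Qed.

Lemma psd_rank1 v : psd (v *m v^T).
Proof.
split=> [|x]; first by rewrite trmx_mul trmxK.
rewrite -/(bform _ x x) bform_rank1.
have -> : (v^T *m x) 0 0 = (x^T *m v) 0 0 by rewrite -[v^T *m x]trmxK trmx_mul trmxK mxE.
by rewrite -expr2 sqr_ge0.
Qed.

Lemma psdD A B : psd A -> psd B -> psd (A + B).
Proof.
move=> [sA pA] [sB pB]; split=> [|x]; first by rewrite linearD /= sA sB.
by rewrite mulmxDr mulmxDl mxE addr_ge0.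
Qed.

Lemma psd_congr A (M : 'M[R]_n) : psd A -> psd (M^T *m A *m M).
Proof.
move=> [sA pA]; split=> [|x]; first by rewrite !trmx_mul trmxK sA mulmxA.
by have := pA (M *m x); rewrite trmx_mul !mulmxA.
Qed.

Lemma elliptope_entry_bound P i j : elliptope P -> -1 <= P i j <= 1.
Proof.
move=> [[sP pP] dP]; have line t := pP (delta_mx i 0 + t *: delta_mx j 0).
have := line 1; have := line (-1).
rewrite -!/(bform _ _ _) !bform_line // !bform_delta !dP; lra.
Qed.

(* The Schur complement step: its form at x is that of A at x - (b / A i i) e_i,
   with b the form of A at (x, e_i). *)
Lemma psd_sub_rank1 A i : psd A -> 0 < A i i ->
  psd (A - (A i i)^-1 *: (col i A *m (col i A)^T)).
Proof.
move=> [sA pA] ai; split=> [|x].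
  by rewrite linearB linearZ /= trmx_mul trmxK sA.
rewrite -/(bform _ x x) bformB bformZm bform_rank1 colE mulmxA -/(bform _ x _).
have -> : ((A *m delta_mx i 0 : 'cV_n)^T *m x) 0 0 = bform A x (delta_mx i 0).
  by rewrite trmx_mul sA -/(bform _ _ x) (bformC _ _ sA).
set b := bform A x (delta_mx i 0).
set y := x + (- b / A i i) *: delta_mx i 0.
have -> : bform A x x - (A i i)^-1 * (b * b) = bform A y y.
  by rewrite bform_line // bform_delta -/b; field; rewrite gt_eqF.
exact: pA.
Qed.

Lemma psd_diag0_eq0 A : psd A -> (forall i, A i i = 0) -> A = 0.
Proof. by move=> hA h0; apply/matrixP => i j; rewrite mxE (psd_diag_eq0 _ hA). Qed.

(* Induction on the number of nonzero diagonal entries, peeled off by [psd_sub_rank1]. *)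
Lemma psd_gram A : psd A -> exists vs : seq 'cV[R]_n, A = \sum_(v <- vs) v *m v^T.
Proof.
move: {2}#|_| (leqnn #|[set i | A i i != 0]|) => k.
elim: k A => [|k IH] A hk hA.
  exists [::]; rewrite big_nil (psd_diag0_eq0 hA) // => i; apply/eqP.
  by apply: contraTT hk => ai; rewrite -ltnNge card_gt0; apply/set0Pn; exists i; rewrite inE.
have [A0|[i ai]] : (forall i, A i i = 0) \/ exists i, A i i != 0.
    case: (pickP (fun i => A i i != 0)) => [i ai|A0]; first by right; exists i.
    by left=> i; apply/eqP/negbFE/A0.
  by exists [::]; rewrite big_nil (psd_diag0_eq0 hA A0).
have a0 : 0 < A i i by rewrite lt_def ai psd_diag_ge0.
set q := col i A; set A' := A - (A i i)^-1 *: (q *m q^T).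
have A'E j : A' j j = A j j - (A i i)^-1 * A j i ^+ 2.
  by rewrite !mxE big_ord1 !mxE expr2.
have sub : [set j | A' j j != 0] \subset [set j | A j j != 0] :\ i.
  apply/fintype.subsetP => j; rewrite !inE A'E; apply: contraR; rewrite negb_and !negbK.
  case/orP=> [/eqP-> | /eqP Ajj]; first by rewrite expr2 mulKf ?subrr // gt_eqF.
  by rewrite Ajj (psd_diag_eq0 _ hA Ajj) expr0n /= mulr0 subrr.
have hk' : (#|[set j | A' j j != 0%R]| <= k)%N.
  rewrite (leq_trans (subset_leq_card sub)) // -ltnS.
  by rewrite (cardsD1 i) inE ai in hk.
have [vs Avs] := IH A' hk' (psd_sub_rank1 hA a0).
exists ((Num.sqrt (A i i))^-1 *: q :: vs); rewrite big_cons -Avs addrC /A'.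
rewrite [(_ *: q)^T]linearZ /= -scalemxAl -scalemxAr scalerA -invrM ?unitfE ?gt_eqF ?sqrtr_gt0 //.
by rewrite -expr2 sqr_sqrtr ?ltW // subrK.
Qed.

Lemma frobDl A B S : frob (A + B) S = frob A S + frob B S.
Proof.
rewrite /frob -big_split; apply: eq_bigr => i _; rewrite -big_split.
by apply: eq_bigr => j _; rewrite mxE mulrDl.
Qed.

Lemma frobBr Q A B : frob Q (A - B) = frob Q A - frob Q B.
Proof.
rewrite /frob -sumrB; apply: eq_bigr => i _; rewrite -sumrB.
by apply: eq_bigr => j _; rewrite !mxE mulrBr.
Qed.

Lemma frob0l S : frob 0 S = 0.
Proof. by rewrite /frob big1 // => i _; rewrite big1 // => j _; rewrite mxE mul0r. Qed.

Lemma frob_rank1 v S : frob (v *m v^T) S = bform S v v.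
Proof.
rewrite bformE; apply: eq_bigr => i _; apply: eq_bigr => j _.
by rewrite !mxE big_ord1 mxE mulrAC.
Qed.

Lemma frob_gram (vs : seq 'cV[R]_n) S :
  frob (\sum_(v <- vs) v *m v^T) S = \sum_(v <- vs) bform S v v.
Proof.
rewrite (big_morph (fun A => frob A S) (fun A B => frobDl A B S) (frob0l S)).
by apply: eq_bigr => v _; rewrite frob_rank1.
Qed.

Lemma frob_psd_ge0 Q S : psd Q -> psd S -> 0 <= frob Q S.
Proof.
move=> /psd_gram[vs ->] [_ pS]; rewrite frob_gram.
by apply: sumr_ge0 => v _; apply: pS.
Qed.

Lemma frob_psd_eq0 Q S : psd Q -> psd S -> frob Q S = 0 -> Q *m S = 0.
Proof.
move=> /psd_gram[vs ->] hS; rewrite frob_gram => /eqP.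
rewrite psumr_eq0 => [/allP null|v _]; last exact: hS.2.
rewrite mulmx_suml big_seq big1 // => v /null /eqP/(psd_mulmx_null hS) Sv.
have vS : v^T *m S = (S *m v)^T by rewrite trmx_mul hS.1.
by rewrite -mulmxA vS Sv trmx0 mulmx0.
Qed.

Lemma frob_mulmx_eq0 Q S : S^T = S -> Q *m S = 0 -> frob Q S = 0.
Proof.
move=> sS QS; rewrite /frob big1 // => i _.
suff -> : \sum_j Q i j * S i j = (Q *m S) i i by rewrite QS mxE.
by rewrite mxE; apply: eq_bigr => j _; rewrite -[S in RHS]sS mxE.
Qed.

End Semidefinite.

(** * Duality *)

Lemma le_div_perturb (R : realFieldType) (m a b s : R) :
  0 <= a -> 0 <= b -> 0 <= s <= 1 ->
  m / ((1 + s * a) * (1 + s * b)) <= m + s * (`|m| * (a + b + a * b)).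
Proof.
move=> a0 b0 /andP[s0 s1]; set d := (1 + s * a) * (1 + s * b).
have sab : 0 <= s * a * b by rewrite !mulr_ge0.
have d1 : 1 <= d by rewrite /d; nra.
have dgap : d - 1 <= s * (a + b + a * b) by rewrite /d; nra.
have -> : m / d = m - m * (d - 1) / d by field; rewrite gt_eqF // (lt_le_trans ltr01).
have : - (m * (d - 1)) / d <= `|m| * (d - 1).
  rewrite ler_pdivrMr ?(lt_le_trans ltr01) //.
  have h1 : 0 <= (`|m| + m) * (d - 1) by rewrite mulr_ge0 ?subr_ge0 // -lerBlDr sub0r -normrN ler_norm.
  have h2 : 0 <= `|m| * (d - 1) * (d - 1) by rewrite !mulr_ge0 ?subr_ge0.
  nra.
have := normr_ge0 m; rewrite mulNr; nra.
Qed.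

Lemma ge0_of_linear_lower_bounds (R : realFieldType) (M C : R) :
  (forall s, 0 < s <= 1 -> - (s * C) <= M) -> 0 <= M.
Proof.
move=> H; rewrite leNgt; apply/negP => M0.
have C0 : 0 <= C by have := H 1; rewrite ltr01 lexx => /(_ isT); lra.
set s := Num.min 1 (- M / (C + 1)).
have s0 : 0 < s by rewrite lt_min ltr01 divr_gt0 //; lra.
have s1 : s <= 1 by rewrite ge_min lexx.
have sM : s * (C + 1) <= - M by rewrite -ler_pdivlMr ?ge_min ?lexx ?orbT //; lra.
have := H s; rewrite s0 s1 => /(_ isT); nra.
Qed.

(* (cayley_cos y, cayley_sin y) = (cos t, sin t) for y = tan (t / 2), with no square roots. *)
Definition cayley_cos {R : fieldType} (y : R) := (1 - y ^+ 2) / (1 + y ^+ 2).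
Definition cayley_sin {R : fieldType} (y : R) := 2 * y / (1 + y ^+ 2).

Lemma cayley_norm (R : realFieldType) (y : R) : cayley_cos y ^+ 2 + cayley_sin y ^+ 2 = 1.
Proof.
have y0 : 1 + y ^+ 2 != 0 by rewrite gt_eqF // ltr_wpDr ?sqr_ge0.
by rewrite /cayley_cos /cayley_sin; field.
Qed.

Section Duality.
Variables (R : realType) (n : nat).
Implicit Types (D P Q W : 'M[R]_n) (x y : 'cV[R]_n).

(* The matrix D_P; it is D* when P is primal optimal. *)
Definition dual_of P W : 'M[R]_n := diag_mx (\row_i \sum_j P i j * W i j).

Lemma dual_of_diag P W : is_diag_mx (dual_of P W).
Proof. exact: diag_mx_is_diag. Qed.

Lemma trace_dual_of P W : \sum_i dual_of P W i i = frob P W.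
Proof. by apply: eq_bigr => i _; rewrite !mxE eqxx mulr1n. Qed.

Lemma frob_diag Q D : elliptope Q -> is_diag_mx D -> frob Q D = \sum_i D i i.
Proof.
move=> [_ dQ] /is_diag_mxP hD; apply: eq_bigr => i _.
rewrite (bigD1 i) //= big1 ?addr0 ?dQ ?mul1r // => j ji.
by rewrite hD ?mulr0 // eq_sym.
Qed.

Lemma frob_gap Q W D : elliptope Q -> is_diag_mx D ->
  frob Q (W - D) = frob Q W - \sum_i D i i.
Proof. by move=> hQ hD; rewrite frobBr (frob_diag hQ hD). Qed.

Lemma weak_duality Q W D : elliptope Q -> dual_feasible W D ->
  \sum_i D i i <= frob Q W.
Proof.
move=> hQ [hD hWD]; rewrite -subr_ge0 -frob_gap //.
exact: frob_psd_ge0 hQ.1 hWD.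
Qed.

(* If P is the Gram matrix of unit vectors u_i, rotate P y is the Gram matrix of
   cos t_i u_i + sin t_i e, with e a unit vector orthogonal to all u_i. *)
Definition rotate P (y : 'cV[R]_n) : 'M[R]_n :=
  let C := diag_mx (map_mx cayley_cos y)^T in
  let s := map_mx cayley_sin y in
  C^T *m P *m C + s *m s^T.

Lemma rotate_entry P y i j : rotate P y i j =
  cayley_cos (y i 0) * cayley_cos (y j 0) * P i j + cayley_sin (y i 0) * cayley_sin (y j 0).
Proof. by rewrite /rotate tr_diag_mx mul_diag_mx mul_mx_diag !mxE big_ord1 !mxE mulrAC. Qed.

Lemma elliptope_rotate P y : elliptope P -> elliptope (rotate P y).
Proof.
move=> [hP dP]; split; first exact: psdD (psd_congr _ hP) (psd_rank1 _).
by move=> i; rewrite rotate_entry dP mulr1 -!expr2 cayley_norm.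
Qed.

Definition first_variation W P x i j : R :=
  W i j * (2 * x i 0 * x j 0 - (x i 0 ^+ 2 + x j 0 ^+ 2) * P i j).

Lemma bform_dual_gap W P x : W^T = W -> P^T = P ->
  2 * bform (W - dual_of P W) x x = \sum_i \sum_j first_variation W P x i j.
Proof.
move=> sW sP; set Dx := \sum_i \sum_j W i j * x i 0 ^+ 2 * P i j.
have DxC : \sum_i \sum_j W i j * x j 0 ^+ 2 * P i j = Dx.
  rewrite exchange_big; apply: eq_bigr => i _; apply: eq_bigr => j _.
  by rewrite -[W in LHS]sW -[P in LHS]sP !mxE.
have Dform : bform (dual_of P W) x x = Dx.
  rewrite bform_diag; apply: eq_bigr => i _; rewrite mxE mulr_suml.
  by apply: eq_bigr => j _; ring.
have -> : \sum_i \sum_j first_variation W P x i j =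
          2 * bform W x x - Dx - \sum_i \sum_j W i j * x j 0 ^+ 2 * P i j.
  rewrite bformE mulr_sumr -!sumrB; apply: eq_bigr => i _.
  by rewrite mulr_sumr -!sumrB; apply: eq_bigr => j _; rewrite /first_variation; ring.
by rewrite DxC bformB Dform; ring.
Qed.

Lemma rotate_gain W P x e :
  frob (rotate P (e *: x)) W - frob P W = 2 * e ^+ 2 *
    \sum_i \sum_j first_variation W P x i j / ((1 + e ^+ 2 * x i 0 ^+ 2) * (1 + e ^+ 2 * x j 0 ^+ 2)).
Proof.
rewrite /frob -sumrB mulr_sumr; apply: eq_bigr => i _.
rewrite -sumrB mulr_sumr; apply: eq_bigr => j _.
have den (r : R) : 1 + r ^+ 2 != 0 by rewrite gt_eqF // ltr_wpDr ?sqr_ge0.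
rewrite rotate_entry /first_variation /cayley_cos /cayley_sin !mxE !exprMn.
by field; rewrite !den.
Qed.

(* First-order optimality: by [rotate_gain], the gain of rotating by sqrt s * x
   divided by 2 s tends to the sum of [first_variation] as s -> 0. *)
Lemma psd_sub_dual_of W P : W^T = W -> primal_opt W P -> psd (W - dual_of P W).
Proof.
move=> sW [hP opt]; split=> [|x].
  by rewrite linearB /= tr_diag_mx sW.
rewrite -/(bform _ x x) -(pmulr_rge0 _ (ltr0Sn _ 1)) bform_dual_gap //; last exact: hP.1.1.
set C := \sum_i \sum_j
  `|first_variation W P x i j| * (x i 0 ^+ 2 + x j 0 ^+ 2 + x i 0 ^+ 2 * x j 0 ^+ 2).
apply: (@ge0_of_linear_lower_bounds _ _ C) => s /andP[s0 s1].
have e2 : Num.sqrt s ^+ 2 = s by rewrite sqr_sqrtr ?ltW.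
have := opt _ (elliptope_rotate (Num.sqrt s *: x) hP).
rewrite -subr_ge0 rotate_gain e2 pmulr_rge0 ?mulr_gt0 // => gain.
suff : \sum_i \sum_j first_variation W P x i j / ((1 + s * x i 0 ^+ 2) * (1 + s * x j 0 ^+ 2))
       <= \sum_i \sum_j first_variation W P x i j + s * C by lra.
rewrite /C mulr_sumr -big_split; apply: ler_sum => i _.
rewrite mulr_sumr -big_split /=; apply: ler_sum => j _.
by apply: le_div_perturb; rewrite ?sqr_ge0 ?(ltW s0).
Qed.

Lemma dual_feasible_dual_of W P : W^T = W -> primal_opt W P -> dual_feasible W (dual_of P W).
Proof. by move=> sW hP; split; [exact: dual_of_diag | exact: psd_sub_dual_of]. Qed.

Lemma complementary_slackness W P D : elliptope P -> dual_feasible W D ->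
  P *m (W - D) = 0 <-> frob P W = \sum_i D i i.
Proof.
move=> hP [hD hWD]; split=> [PWD|eq_obj].
  by apply/eqP; rewrite -subr_eq0 -frob_gap // (frob_mulmx_eq0 hWD.1 PWD).
by apply: frob_psd_eq0 hP.1 hWD _; rewrite frob_gap // eq_obj subrr.
Qed.

Lemma dual_of_unique W P D : W^T = W -> elliptope P -> is_diag_mx D ->
  P *m (W - D) = 0 -> D = dual_of P W.
Proof.
move=> sW [_ dP] /diag_mxP[d ->] PWD; congr diag_mx; apply/rowP => i.
have := congr1 (fun M : 'M[R]_n => M i i) PWD.
rewrite mulmxBr mul_mx_diag !mxE dP mul1r => /eqP; rewrite subr_eq0 => /eqP <-.
by apply: eq_bigr => k _; rewrite -[W in LHS]sW mxE.
Qed.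

Lemma dual_opt_iff W P0 D : W^T = W -> primal_opt W P0 ->
  dual_opt W D <-> D = dual_of P0 W.
Proof.
move=> sW hP0; have feas0 := dual_feasible_dual_of sW hP0.
split=> [[hD optD] | ->]; last first.
  by split=> // D' hD'; rewrite trace_dual_of; apply: weak_duality hP0.1 hD'.
apply: dual_of_unique sW hP0.1 hD.1 _; apply/(complementary_slackness hP0.1 hD).
apply/eqP; rewrite eq_le weak_duality ?andbT //; last exact: hP0.1.
by rewrite -trace_dual_of optD.
Qed.

Lemma primal_opt_iff W P0 P : W^T = W -> primal_opt W P0 ->
  primal_opt W P <-> elliptope P /\ P *m (W - dual_of P0 W) = 0.
Proof.
move=> sW hP0; have feas0 := dual_feasible_dual_of sW hP0.
split=> [[hP optP] | [hP /(complementary_slackness hP feas0) eq_obj]].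
  split=> //; apply/(complementary_slackness hP feas0)/eqP.
  rewrite eq_le weak_duality // andbT trace_dual_of; exact: optP hP0.1.
by split=> // Q hQ; rewrite eq_obj weak_duality.
Qed.

End Duality.

(** * Existence of a primal optimum *)

Local Open Scope classical_set_scope.
Local Open Scope ring_scope.

Lemma continuous_sum (K : numFieldType) (T : topologicalType) (I : Type) (r : seq I)
    (F : I -> T -> K) :
  (forall i, continuous (F i)) -> continuous (fun t => \sum_(i <- r) F i t).
Proof.
move=> cF; elim: r => [|i r IH].
  by under [fun t => _]boolp.funext do rewrite big_nil; exact: cst_continuous.
under [fun t => _]boolp.funext do rewrite big_cons.
by move=> t; apply: continuousD; [exact: cF | exact: IH].
Qed.

Lemma closed_forall (R : realType) (T : topologicalType) (I : Type)
    (A : set R) (f : I -> T -> R) :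
  closed A -> (forall i, continuous (f i)) -> closed [set t | forall i, A (f i t)].
Proof.
move=> cA cf; have -> : [set t | forall i, A (f i t)] = \bigcap_(i in setT) (f i @^-1` A).
  by apply/seteqP; split=> t /= h i => [_|]; exact: h.
by apply: closed_bigI => i _; apply: preimage_closed.
Qed.

Section Existence.
Variables (R : realType) (n : nat).

Lemma continuous_vec_mx_entry i j : continuous (fun v : 'rV[R]_(n * n) => vec_mx v i j).
Proof. by under [fun v => _]boolp.funext do rewrite mxE; exact: coord_continuous. Qed.

Lemma continuous_vec_mx_comb (c : 'I_n -> 'I_n -> R) :
  continuous (fun v : 'rV[R]_(n * n) => \sum_i \sum_j c i j * vec_mx v i j).
Proof.
apply: continuous_sum => i; apply: continuous_sum => j v.
exact: cvgMl_tmp (@continuous_vec_mx_entry i j v).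
Qed.

Lemma closed_elliptope : closed [set v : 'rV[R]_(n * n) | elliptope (vec_mx v)].
Proof.
have -> : [set v : 'rV[R]_(n * n) | elliptope (vec_mx v)] =
  [set v | forall x : 'cV[R]_n, [set t : R | 0 <= t]
     (\sum_i \sum_j (x i 0 * x j 0) * vec_mx v i j)] `&`
  [set v | forall ij : 'I_n * 'I_n, [set t : R | t = 0]
     (vec_mx v ij.1 ij.2 - vec_mx v ij.2 ij.1)] `&`
  [set v | forall k, [set t : R | t = 1] (vec_mx v k k)].
  apply/seteqP; split=> v /=.
    move=> [[sA pA] dA]; split; [split|] => // [x | [i j] /=].
      by have := pA x; rewrite -/(bform _ _ _) bformE; under eq_bigr do under eq_bigr do rewrite mulrAC.
    by rewrite -{1}sA mxE subrr.
  move=> [[pA sA] dA]; split=> //; split=> [|x].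
    by apply/matrixP => i j; apply/eqP; rewrite mxE -subr_eq0; apply/eqP/(sA (j, i)).
  by have := pA x; rewrite -/(bform _ _ _) bformE; under [X in _ <= X -> _]eq_bigr do under eq_bigr do rewrite mulrAC.
apply: closedI; first apply: closedI; apply: closed_forall.
- exact: closed_ge.
- by move=> x; exact: (@continuous_vec_mx_comb (fun i j => x i 0 * x j 0)).
- exact: closed_eq.
- by move=> ij v; apply: continuousB; exact: continuous_vec_mx_entry.
- exact: closed_eq.
- by move=> k; exact: continuous_vec_mx_entry.
Qed.

Lemma elliptope1 : elliptope (1%:M : 'M[R]_n).
Proof.
split=> [|i]; last by rewrite mxE eqxx.
split=> [|x]; first by rewrite trmx1.
by rewrite mulmx1 mxE sumr_ge0 // => i _; rewrite mxE -expr2 sqr_ge0.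
Qed.

Lemma primal_opt_exists W : exists P : 'M[R]_n, primal_opt W P.
Proof.
set E := [set v : 'rV[R]_(n * n) | elliptope (vec_mx v)].
have E0 : E !=set0 by exists (mxvec 1%:M); rewrite /E /= mxvecK; exact: elliptope1.
have Ecompact : compact E.
  apply: (subclosed_compact closed_elliptope
    (@rV_compact _ _ (fun=> `[(-1 : R), 1]%classic) (fun=> @segment_compact R (-1) 1))).
  move=> v /= hv k; case: (mxvec_indexP k) => i j.
  by have := elliptope_entry_bound i j hv; rewrite mxE /= in_itv.
have frob_cont : {within E, continuous (fun v => frob (vec_mx v) W)}.
  apply: continuous_subspaceT; rewrite /frob.
  under [fun v => _]boolp.funext do under eq_bigr do under eq_bigr do rewrite mulrC.
  exact: (@continuous_vec_mx_comb W).
have [v Ev vmin] := compact_EVT_min E0 Ecompact frob_cont.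
exists (vec_mx v); split=> [|Q hQ]; first by rewrite inE in Ev.
by rewrite -[Q]mxvecK vmin // inE /E /= mxvecK.
Qed.

End Existence.

Theorem theorem6 (R : realType) (n : nat) (W : 'M[R]_n) :
  W^T = W ->
  (forall i j, 0 <= W i j) ->
  (forall i, W i i = 0) ->
  exists Dstar : 'M[R]_n,
    (forall D, dual_opt W D <-> D = Dstar) /\
    (forall P, primal_opt W P <-> (elliptope P /\ P *m (W - Dstar) = 0)).
Proof.
move=> sW _ _; have [P0 hP0] := primal_opt_exists W.
exists (dual_of P0 W); split=> [D | P]; [exact: dual_opt_iff | exact: primal_opt_iff].
Qed.
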